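(* Let $C^*\ge10^6$ be the fixed constant of the context and let $\mathbf{A}\in[-1,1]^{m\times n}$ with $n\ge C^*\cdot m$. With probability at least $0.99$ over its random bits $\mathbf{r}$, the procedure $\textsc{ColumnReductionSampling}$ described in the context does not return $\bot$ and returns $\mathbf{x}_T\in[-1,1]^n$ with $|\{i\in[n]:|\mathbf{x}_T(i)|=1\}|=0.9n$ and $\|\mathbf{A}\mathbf{x}_T\|_\infty=0$. Moreover, for different random seeds $\mathbf{r}\neq\mathbf{r}'$, the outputs $\mathbf{x}_T$ and $\mathbf{x}'_T$ of the procedure on $\mathbf{r}$ and $\mathbf{r}'$ differ on some entry $i$ at which both lie in $\{\pm1\}$.
   Context: Leverage scores: for a linear subspace $H\subseteq\mathbb{R}^S$ and $i\in S$, $\tau_i(H)=\max_{\mathbf{u}\in H\setminus\{0\}}\mathbf{u}(i)^2/\|\mathbf{u}\|_2^2$. If $\psi_1,\dots,\psi_d$ is an orthonormal basis of $H$, then $\tau_i(H)=\sum_j\psi_j(i)^2$ and $\textsc{FindVector}(H,i)$ returns $\mathbf{u}=(\sum_j\psi_j(i)\psi_j)/(\sum_j\psi_j(i)^2)$, the vector of $H$ with $\mathbf{u}(i)=1$ and $\|\mathbf{u}\|_2^2=1/\tau_i(H)$. For $\mathbf{v}\in\mathbb{R}^n$ and $S\subseteq[n]$, $\mathbf{v}(S)$ is its restriction to $S$; vectors in $\mathbb{R}^S$ are extended by zero to $\mathbb{R}^n$. Procedure $\textsc{ColumnReductionSampling}$ with parameters $\eta=0.1$, $T=0.9n$, $\gamma=0.0001$,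 $\delta=0.05$: set $\mathbf{x}_0=\vec 0$. For $t=0,\dots,T-1$: let $\mathcal{F}_t=\{i:|\mathbf{x}_t(i)|=1\}$, $\mathcal{D}_t=\{i:|\mathbf{x}_t(i)|\ge1-\eta\}$; let $H_t$ be the subspace of $\mathbb{R}^{[n]\setminus\mathcal{D}_t}$ orthogonal to $\mathbf{x}_t([n]\setminus\mathcal{D}_t)$ and to every $\mathbf{A}(j,[n]\setminus\mathcal{D}_t)$, $j\in[m]$; find the first coordinate $k_t\notin\mathcal{D}_t$ with $\tau_{k_t}(H_t)\ge1-\gamma$ and $|\mathbf{x}_t(k_t)|\le\delta$ (return $\bot$ if none exists); let $\mathbf{u}_t=\textsc{FindVector}(H_t,k_t)$; with $\delta_t=\mathbf{x}_t(k_t)$, set $\mathbf{r}(t+1)=1$ with probability $\frac{1+\delta_t}{2}$ and $\mathbf{r}(t+1)=-1$ otherwise; choose $\alpha_t\in\mathbb{R}$ so that $\mathbf{x}_{t+1}=\mathbf{x}_t+\alpha_t\mathbf{u}_t$ satisfies $\mathbf{x}_{t+1}(k_t)=\mathbf{r}(t+1)$. Return $\mathbf{x}_T$. The sequence $\mathbf{r}\in\{\pm1\}^T$ is the random seed. *)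

From HB Require Import structures.
From mathcomp Require Import all_boot all_order all_algebra.
From mathcomp Require Import boolp classical_sets reals.
Set Implicit Arguments. Unset Strict Implicit. Unset Printing Implicit Defensive.
Import Order.TTheory GRing.Theory Num.Theory.
Local Open Scope ring_scope.
Local Open Scope classical_set_scope.

(* Vectors of R^n are row vectors 'rV[R]_n; v ord0 i is the entry v(i). *)
Section ColumnReductionSampling.
Variable R : realType.
Variables m n : nat.
Variable A : 'M[R]_(m, n).

Definition crs_eta : R := 1 / 10.
Definition crs_gamma : R := 1 / 10000.
Definition crs_delta : R := 1 / 20.

Definition sqnorm (u : 'rV[R]_n) : R := \sum_(j < n) (u ord0 j) ^+ 2.

(* tau_i(H) = max_{u in H \ {0}} u(i)^2 / ||u||_2^2 (the max exists; we take the sup). *)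
Definition leverage (H : set 'rV[R]_n) (i : 'I_n) : R :=
  sup [set (u ord0 i) ^+ 2 / sqnorm u | u in H `&` [set u | u != 0]].

(* FindVector(H,i): the vector u of H with u(i) = 1 and ||u||^2 = 1/tau_i(H)
   (this vector is unique; it equals (sum_j psi_j(i) psi_j)/(sum_j psi_j(i)^2)
   for any orthonormal basis psi of H). *)
Definition find_vector (H : set 'rV[R]_n) (i : 'I_n) : 'rV[R]_n :=
  xget 0 [set u | H u /\ u ord0 i = 1 /\ sqnorm u = (leverage H i)^-1].

Definition Dset (x : 'rV[R]_n) : {set 'I_n} :=
  [set i | 1 - crs_eta <= `|x ord0 i|].

(* H_t : the subspace of R^{[n] \ D_t} (extended by zero to R^n) orthogonal to
   x_t([n] \ D_t) and to every row A(j, [n] \ D_t). *)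
Definition Hsub (x : 'rV[R]_n) : set 'rV[R]_n :=
  [set v | (forall i, i \in Dset x -> v ord0 i = 0)
         /\ \sum_(i < n | i \notin Dset x) v ord0 i * x ord0 i = 0
         /\ (forall j : 'I_m, \sum_(i < n | i \notin Dset x) A j i * v ord0 i = 0)].

(* k_t : the first coordinate (in the order 0,1,...,n-1) outside D_t with
   tau_k(H_t) >= 1 - gamma and |x_t(k)| <= delta; None encodes bot. *)
Definition pick_k (x : 'rV[R]_n) : option 'I_n :=
  ohead [seq k <- enum 'I_n | (k \notin Dset x)
            && (1 - crs_gamma <= leverage (Hsub x) k)
            && (`|x ord0 k| <= crs_delta)].

Definition sgnb (b : bool) : R := if b then 1 else -1.

(* One iteration with random bit b = r(t+1): returns (k_t, x_{t+1}) where
   x_{t+1} = x_t + alpha_t u_t, alpha_t = r(t+1) - x_t(k_t) (so that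
   x_{t+1}(k_t) = r(t+1), as u_t(k_t) = 1); None encodes bot. *)
Definition crs_step (x : 'rV[R]_n) (b : bool) : option ('I_n * 'rV[R]_n) :=
  match pick_k x with
  | None => None
  | Some k => let u := find_vector (Hsub x) k in
              Some (k, x + (sgnb b - x ord0 k) *: u)
  end.

Fixpoint run_from (x : 'rV[R]_n) (bits : seq bool) : option 'rV[R]_n :=
  match bits with
  | [::] => Some x
  | b :: bs => match crs_step x b with
               | None => None
               | Some (_, x') => run_from x' bs
               end
  end.

(* Probability weight of a seed: bit r(t+1) equals +1 with probability
   (1 + delta_t)/2 and -1 otherwise, delta_t = x_t(k_t). Once the procedure
   has returned bot, the (unused) remaining bits are taken to be fair coins. *)
Fixpoint weight_from (x : 'rV[R]_n) (bits : seq bool) : R :=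
  match bits with
  | [::] => 1
  | b :: bs => match crs_step x b with
               | None => (2^-1) ^+ size bits
               | Some (k, x') => (1 + sgnb b * x ord0 k) / 2 * weight_from x' bs
               end
  end.

Definition crs_run (T : nat) (r : T.-tuple bool) : option 'rV[R]_n :=
  run_from 0 r.

Definition crs_weight (T : nat) (r : T.-tuple bool) : R := weight_from 0 r.

Definition crs_good (T : nat) (r : T.-tuple bool) : bool :=
  match crs_run r with
  | None => false
  | Some x => [forall i, `|x ord0 i| <= 1]
              && (#|[set i | `|x ord0 i| == 1]| == T)
              && (\big[Num.max/0]_(j < m) `|\sum_(i < n) A j i * x ord0 i| == 0)
  end.

End ColumnReductionSampling.

(* Every step moves x_t inside H_t, so A x_t stays 0, the coordinates in D_t
   never move again, and x(k_t) lands exactly on r(t+1) = +-1.  As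
   tau_{k_t}(H_t) >= 1 - gamma, the step vector has ||u_t||^2 <= 1/(1 - gamma),
   so every other coordinate moves by less than 1/90 and none of them enters
   the band [19/20, 1): after t steps exactly t coordinates are at +-1.

   H_t has codimension at most m + 1 among the coordinates outside D_t, so the
   leverage deficits satisfy sum_k (1 - tau_k(H_t)) <= m + 1.  If no coordinate
   qualifies before step T, each free coordinate lies in D_t, exceeds delta, or
   has deficit above gamma, which forces ||x_t||^2 - t >= n/5000.  The coin is
   biased so that E[alpha_t^2] = 1 - delta_t^2, hence
   exp(lambda (||x_t||^2 - t - c t)) is a supermartingale for lambda = 1/20 and
   c = 1/9990, and optional stopping bounds the probability of bot by
   exp(-lambda (n/5000 - c T)) <= e^(-27/5) < 1/100.

   Two distinct seeds agree up to their first differing bit; there both runs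
   sit at the same x_t and freeze k_t at opposite signs, for good. *)

From mathcomp Require Import all_boot all_order all_algebra.
From mathcomp Require Import boolp classical_sets reals.
From mathcomp Require Import sequences exp.
From mathcomp.algebra_tactics Require Import ring lra.
From mathcomp Require Import zify.
Import Order.TTheory GRing.Theory Num.Theory.
Local Open Scope ring_scope.
Set Implicit Arguments. Unset Strict Implicit. Unset Printing Implicit Defensive.

Lemma big_tuple_cons (T : finType) (V : nmodType) (F : seq T -> V) s :
  \sum_(r : s.+1.-tuple T) F r = \sum_(b : T) \sum_(r : s.-tuple T) F (b :: r).
Proof.
rewrite pair_big /= (reindex (fun p : T * s.-tuple T => [tuple of p.1 :: p.2])) //.
exists (fun r => (thead r, [tuple of behead r])) => [[b r] _ | r _] /=.
  by congr pair; apply: val_inj.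
by rewrite -tuple_eta.
Qed.

Lemma big_tuple0 (T : finType) (V : nmodType) (F : seq T -> V) :
  \sum_(r : 0.-tuple T) F r = F [::].
Proof.
rewrite (eq_bigr (fun _ => F [::])) => [|r _]; last by rewrite tuple0.
by rewrite sumr_const card_tuple expn0.
Qed.

Section ExpBounds.
Variable R : realType.

Lemma expR_le_quadratic (z : R) : `|z| <= 1/2 -> expR z <= 1 + z + 2 * z ^+ 2.
Proof.
rewrite ler_norml => /andP [zlo zhi].
have ez_mul : expR z * (1 - z) <= 1.
  have := expR_ge1Dx (- z); rewrite addrC => e_ge.
  apply: (le_trans (ler_wpM2l (ltW (expR_gt0 z)) e_ge)).
  by rewrite -expRD subrr expR0.
have : 1 <= (1 - z) * (1 + z + 2 * z ^+ 2) by nra.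
nra.
Qed.

Definition tilt : R := 1 / 20.
Definition drift : R := 1 / 9990.

(* Expansion to second order: the linear term of the exponent has mean
   (1 - d^2) S - 1 <= S - 1 - d^2, which absorbs the quadratic term. *)
Lemma two_point_mgf (d S : R) : `|d| <= 1/20 -> 1 <= S -> S <= 10000/9999 ->
  \sum_(b : bool) (1 + sgnb R b * d) / 2 * expR (tilt * ((sgnb R b - d) ^+ 2 * S - 1))
  <= expR (tilt * drift).
Proof.
rewrite ler_norml => /andP [dlo dhi] S_ge1 S_le.
rewrite big_bool /= mul1r mulN1r.
set z1 := tilt * _; set z2 := tilt * _.
have z1_small : `|z1| <= 1/2 by rewrite ler_norml /z1 /tilt; apply/andP; split; nra.
have z2_small : `|z2| <= 1/2 by rewrite ler_norml /z2 /tilt; apply/andP; split; nra.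
apply: le_trans (expR_ge1Dx _).
have w1 : 0 <= (1 + d) / 2 by lra.
have w2 : 0 <= (1 + - d) / 2 by lra.
apply: le_trans (lerD (ler_wpM2l w1 (expR_le_quadratic z1_small))
                      (ler_wpM2l w2 (expR_le_quadratic z2_small))) _.
rewrite /z1 /z2 /tilt /drift.
have [e -> /andP [e_ge0 e_le]] : exists2 e, S = 1 + e & 0 <= e <= 1/9999.
  by exists (S - 1); [ring | apply/andP; split; lra].
nra.
Qed.

Lemma tilt_exponent_le (m n T : R) : 10 ^+ 6 * m <= n -> 1 <= m -> T <= 9/10 * n ->
  tilt * (drift * T - n / 5000) <= - (27/5).
Proof. by rewrite /tilt /drift; nra. Qed.

Lemma expR_ge100 : 100 <= expR (27/5 : R).
Proof.
have -> : (27/5 : R) = 16%:R * (27/80) by lra.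
rewrite expRM_natl.
have y_ge : 107/80 <= expR (27/80 : R) by apply: le_trans (expR_ge1Dx _); lra.
have sqr_ge (a y : R) b : 0 <= a -> a <= y -> b <= a * a -> b <= y ^+ 2.
  by move=> a_ge0 ay ba; rewrite expr2; nra.
have -> : (16 = 2 * 2 * 2 * 2)%N by [].
rewrite !exprM.
apply: (sqr_ge (1021/100)); [lra| |lra].
apply: (sqr_ge (3196/1000)); [lra| |lra].
apply: (sqr_ge (1788/1000)); [lra| |lra].
by apply: (sqr_ge (107/80)); [lra| |lra].
Qed.

End ExpBounds.

Section InnerProduct.
Variables (R : realFieldType) (n : nat).
Implicit Types u v w : 'rV[R]_n.

Definition dot u v : R := \sum_(i < n) u ord0 i * v ord0 i.

Lemma dotC u v : dot u v = dot v u.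
Proof. by apply: eq_bigr => i _; rewrite mulrC. Qed.

Lemma dotDl u v w : dot (u + v) w = dot u w + dot v w.
Proof. by rewrite /dot -big_split; apply: eq_bigr => i _; rewrite !mxE mulrDl. Qed.

Lemma dotBl u v w : dot (u - v) w = dot u w - dot v w.
Proof. by rewrite /dot -sumrB; apply: eq_bigr => i _; rewrite !mxE mulrBl. Qed.

Lemma dotZl a u v : dot (a *: u) v = a * dot u v.
Proof. by rewrite /dot mulr_sumr; apply: eq_bigr => i _; rewrite !mxE mulrA. Qed.

Lemma dotDr u v w : dot w (u + v) = dot w u + dot w v.
Proof. by rewrite dotC dotDl !(dotC w). Qed.

Lemma dotBr u v w : dot w (u - v) = dot w u - dot w v.
Proof. by rewrite dotC dotBl !(dotC w). Qed.

Lemma dotZr a u v : dot v (a *: u) = a * dot v u.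
Proof. by rewrite dotC dotZl dotC. Qed.

Lemma dot0l v : dot 0 v = 0.
Proof. by rewrite /dot big1 // => i _; rewrite mxE mul0r. Qed.

Lemma dot0r v : dot v 0 = 0.
Proof. by rewrite dotC dot0l. Qed.

Lemma dot_suml (I : finType) (f : I -> 'rV[R]_n) v :
  dot (\sum_l f l) v = \sum_l dot (f l) v.
Proof. by rewrite /dot exchange_big; apply: eq_bigr => i _; rewrite summxE mulr_suml. Qed.

Lemma dot_sumr (I : finType) (f : I -> 'rV[R]_n) v :
  dot v (\sum_l f l) = \sum_l dot v (f l).
Proof. by rewrite dotC dot_suml; apply: eq_bigr => l _; rewrite dotC. Qed.

Lemma dot_ge0 v : 0 <= dot v v.
Proof. by apply: sumr_ge0 => i _; rewrite -expr2 sqr_ge0. Qed.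

Lemma dot_eq0 v : (dot v v == 0) = (v == 0).
Proof.
apply/idP/eqP => [|->]; last by rewrite dot0l.
rewrite psumr_eq0 => [/allP v0|i _]; last by rewrite -expr2 sqr_ge0.
apply/rowP => i; rewrite mxE.
by have /= := v0 i (mem_index_enum i); rewrite mulf_eq0 orbb => /eqP.
Qed.

Lemma dot_gt0 v : (0 < dot v v) = (v != 0).
Proof. by rewrite lt_def dot_eq0 dot_ge0 andbT. Qed.

Lemma cauchy_schwarz u w : dot u w ^+ 2 <= dot u u * dot w w.
Proof.
have [->|w_neq0] := eqVneq w 0; first by rewrite !dot0r expr0n mulr0.
have w_gt0 : 0 < dot w w by rewrite dot_gt0.
set t := dot u w / dot w w.
have proj : dot (u - t *: w) (u - t *: w) = dot u u - dot u w ^+ 2 / dot w w.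
  by rewrite !(dotBl, dotBr, dotZl, dotZr) (dotC w u) /t; field; rewrite gt_eqF.
by have := dot_ge0 (u - t *: w); rewrite proj subr_ge0 ler_pdivrMr // mulrC.
Qed.

Definition orthonormal_family q (g : 'I_q -> 'rV[R]_n) :=
  forall l l', dot (g l) (g l') = (l == l')%:R.

Definition residual q (g : 'I_q -> 'rV[R]_n) a := a - \sum_l dot a (g l) *: g l.

Definition extend_family q (g : 'I_q -> 'rV[R]_n) r (l : 'I_q.+1) :=
  if unlift ord_max l is Some l' then g l' else r.

Section Orthonormal.
Variables (q : nat) (g : 'I_q -> 'rV[R]_n).
Hypothesis g_on : orthonormal_family g.

Lemma dot_residual a l : dot (residual g a) (g l) = 0.
Proof.
rewrite /residual dotBl dot_suml (bigD1 l) //= big1 => [|l' l'l].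
  by rewrite dotZl g_on eqxx mulr1 addr0 subrr.
by rewrite dotZl g_on (negbTE l'l) mulr0.
Qed.

Lemma dot_residualr v a : (forall l, dot v (g l) = 0) ->
  dot v (residual g a) = dot v a.
Proof.
move=> vg; rewrite /residual dotBr dot_sumr big1 ?subr0 // => l _.
by rewrite dotZr vg mulr0.
Qed.

Lemma orthonormal_extend r : dot r r = 1 -> (forall l, dot r (g l) = 0) ->
  orthonormal_family (extend_family g r).
Proof.
move=> rr rg l l'; rewrite /extend_family.
case: unliftP => [j ->|->]; case: unliftP => [j' ->|->].
- by rewrite g_on (inj_eq lift_inj).
- by rewrite dotC rg eq_sym (negbTE (neq_lift _ _)).
- by rewrite rg (negbTE (neq_lift _ _)).
- by rewrite rr eqxx.
Qed.

End Orthonormal.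

Lemma extend_family_orth q (g : 'I_q -> 'rV[R]_n) r v :
  (forall l, dot v (extend_family g r l) = 0) <->
  dot v r = 0 /\ (forall l, dot v (g l) = 0).
Proof.
split=> [vgr|[vr vg] l]; last by rewrite /extend_family; case: unliftP.
split=> [|l]; first by have := vgr ord_max; rewrite /extend_family unlift_none.
by have := vgr (lift ord_max l); rewrite /extend_family liftK.
Qed.

End InnerProduct.

Section GramSchmidt.
Variables (R : rcfType) (n : nat).

Lemma gram_schmidt (Z : {set 'I_n}) (L : seq 'rV[R]_n) :
  {in L, forall a : 'rV[R]_n, forall i, i \in Z -> a ord0 i = 0} ->
  exists q (g : 'I_q -> 'rV[R]_n),
    [/\ (q <= count (predC1 0%R) L)%N, orthonormal_family g,
        (forall l i, i \in Z -> g l ord0 i = 0) &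
        (forall v, {in L, forall a, dot v a = 0} <-> (forall l, dot v (g l) = 0))].
Proof.
elim: L => [|a L IHL] LZ.
  exists 0%N, (fun=> 0); split=> //; try by case.
  by move=> v; split=> // _ [].
have [|q [g [q_le g_on gZ g_span]]] := IHL.
  by move=> b bL; apply: LZ; rewrite inE bL orbT.
have orth_cons v : {in a :: L, forall b, dot v b = 0} <->
    dot v a = 0 /\ {in L, forall b, dot v b = 0}.
  split=> [vaL|[va vL] b]; last by rewrite inE => /predU1P [->|/vL].
  by split=> [|b bL]; apply: vaL; rewrite inE ?eqxx ?bL ?orbT.
set r := residual g a.
have rZ i : i \in Z -> r ord0 i = 0.
  move=> iZ; rewrite !mxE summxE big1 ?subr0 => [|l _]; last by rewrite mxE gZ ?mulr0.
  by apply: LZ; rewrite ?mem_head.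
have [r0|r_neq0] := eqVneq r 0.
  exists q, g; split=> //; first by apply: leq_trans q_le _; rewrite leq_addl.
  move=> v; rewrite orth_cons g_span; split=> [[]//|vg]; split=> //.
  by rewrite -(dot_residualr a vg) -/r r0 dot0r.
have r_gt0 : 0 < dot r r by rewrite dot_gt0.
set e := (Num.sqrt (dot r r))^-1 *: r.
have ee : dot e e = 1.
  rewrite dotZl dotZr mulrA -expr2 exprVn sqr_sqrtr ?dot_ge0 //.
  by rewrite mulVf // gt_eqF.
have eg l : dot e (g l) = 0 by rewrite dotZl dot_residual ?mulr0.
exists q.+1, (extend_family g e); split.
- have a_neq0 : a != 0.
    apply: contraNneq r_neq0 => a0; rewrite /r /residual a0 sub0r big1 ?oppr0 // => l _.
    by rewrite dot0l scale0r.
  by rewrite /= a_neq0 add1n ltnS.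
- exact: orthonormal_extend.
- move=> l i iZ; rewrite /extend_family; case: unliftP => [j _|_]; first exact: gZ.
  by rewrite mxE rZ // mulr0.
- move=> v; rewrite extend_family_orth orth_cons g_span.
  have ve : (forall l, dot v (g l) = 0) -> (dot v e = 0) = (dot v a = 0).
    move=> vg; rewrite dotZr -(dot_residualr a vg) -/r.
    have s_neq0 : (Num.sqrt (dot r r))^-1 != 0 by rewrite invr_eq0 sqrtr_eq0 -ltNge.
    by apply: propext; split=> [/eqP|->]; rewrite ?mulr0 // mulf_eq0 (negbTE s_neq0) => /eqP.
  by split=> [] [vx vg]; split=> //; rewrite ?(ve vg) in vx *.
Qed.

End GramSchmidt.

Section Sup.
Variable R : realType.
Local Open Scope classical_set_scope.

Lemma sup_eq_max (S : set R) v : S v -> (forall y, S y -> y <= v) -> sup S = v.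
Proof.
move=> Sv S_le; apply/eqP; rewrite eq_le ge_sup //=; last by exists v.
exact: (sup_upper_bound (conj (ex_intro _ v Sv) (ex_intro _ v S_le))).
Qed.

Lemma sup_eq0 (S : set R) : (forall y, S y -> y = 0) -> sup S = 0.
Proof.
move=> S0; have [->|/set0P [y Sy]] := eqVneq S set0; first exact: sup0.
by apply: sup_eq_max; [rewrite -(S0 y Sy) | move=> z /S0 ->].
Qed.

End Sup.

Section Leverage.
Variables (R : realType) (n : nat).
Implicit Types (u v : 'rV[R]_n) (H : set 'rV[R]_n).

Lemma sqnorm_dot v : sqnorm v = dot v v.
Proof. by apply: eq_bigr => i _; rewrite expr2. Qed.

Lemma dot_unit v k : dot v 'e_k = v ord0 k.
Proof.
rewrite /dot (bigD1 k) //= big1 => [|i ik]; first by rewrite mxE eqxx mulr1 addr0.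
by rewrite mxE (negbTE ik) mulr0.
Qed.

Lemma leverage_ratio_le H k (c : R) : (forall u, H u -> u ord0 k ^+ 2 <= c * sqnorm u) ->
  forall u, H u -> u != 0 -> u ord0 k ^+ 2 / sqnorm u <= c.
Proof.
move=> Hc u Hu u_neq0; have u_gt0 : 0 < sqnorm u by rewrite sqnorm_dot dot_gt0.
by rewrite ler_pdivrMr // Hc.
Qed.

Definition perp_off (D : {set 'I_n}) (L : seq 'rV[R]_n) : set 'rV[R]_n :=
  [set v : 'rV[R]_n | (forall i, i \in D -> v ord0 i = 0) /\ {in L, forall a, dot v a = 0}].

Variables (D : {set 'I_n}) (L : seq 'rV[R]_n).
Hypothesis L_off : {in L, forall a : 'rV[R]_n, forall i, i \in D -> a ord0 i = 0}.

Section Basis.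
Variables (q : nat) (g : 'I_q -> 'rV[R]_n).
Hypotheses (g_on : orthonormal_family g) (g_off : forall l i, i \in D -> g l ord0 i = 0).
Hypothesis g_span : forall v, {in L, forall a, dot v a = 0} <-> (forall l, dot v (g l) = 0).

(* [w k] is the orthogonal projection of e_k onto [perp_off D L], and [s k]
   the squared norm of the projection of e_k onto span L. *)
Let s k := \sum_l g l ord0 k ^+ 2.
Let w k := residual g 'e_k.

Lemma sum_proj_sqnorm : \sum_k s k = q%:R.
Proof.
rewrite exchange_big /= -[q in RHS]card_ord -sumr_const; apply: eq_bigr => l _.
transitivity (dot (g l) (g l)); first by apply: eq_bigr => i _; rewrite expr2.
by rewrite g_on eqxx.
Qed.

Lemma dot_proj u k : perp_off D L u -> dot u (w k) = u ord0 k.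
Proof. by case=> _ /g_span u_g; rewrite dot_residualr // dot_unit. Qed.

Lemma proj_perp k : k \notin D -> perp_off D L (w k).
Proof.
move=> kD; split=> [i iD|]; last by apply/g_span => l; apply: dot_residual.
rewrite !mxE summxE big1 => [|l _]; last by rewrite mxE (g_off _ iD) mulr0.
by rewrite subr0 (_ : (i == k) = false) ?andbF //; apply: contraNF kD => /eqP <-.
Qed.

Lemma proj_sqnorm k : k \notin D -> dot (w k) (w k) = 1 - s k.
Proof.
move=> kD; rewrite (dot_proj k (proj_perp kD)) !mxE eqxx summxE.
by congr (_ - _); apply: eq_bigr => l _; rewrite mxE dotC dot_unit expr2.
Qed.

(* Cauchy-Schwarz against [w k], with equality at [u = w k]. *)
Lemma leverage_perp k : k \notin D -> leverage (perp_off D L) k = 1 - s k.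
Proof.
move=> kD; have ww := proj_sqnorm kD.
have bound u : perp_off D L u -> u ord0 k ^+ 2 <= (1 - s k) * sqnorm u.
  by move=> Hu; rewrite -(dot_proj k Hu) -ww sqnorm_dot mulrC cauchy_schwarz.
have [w_eq0|w_neq0] := eqVneq (w k) 0.
  rewrite -ww w_eq0 dot0l; apply: sup_eq0 => _ [u [Hu _] <-].
  by rewrite -(dot_proj k Hu) w_eq0 dot0r expr0n mul0r.
apply: sup_eq_max => [|_ [u [Hu u_neq0] <-]]; last exact: (leverage_ratio_le bound Hu u_neq0).
have w_gt0 : 0 < dot (w k) (w k) by rewrite dot_gt0.
exists (w k); first by split; first exact: proj_perp.
rewrite sqnorm_dot -[w k ord0 k](dot_proj k (proj_perp kD)) ww.
by rewrite -ww expr2 mulfK // gt_eqF.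
Qed.

Lemma unit_at_perp k : k \notin D -> 0 < 1 - s k ->
  exists u, [/\ perp_off D L u, u ord0 k = 1 & sqnorm u = (1 - s k)^-1].
Proof.
move=> kD s_lt1; have ww := proj_sqnorm kD.
exists ((1 - s k)^-1 *: w k); split.
- by case: (proj_perp kD) => w0 wL; split=> [i /w0|a /wL]; rewrite ?mxE ?dotZl => ->;
    rewrite ?mulr0.
- by rewrite mxE -(dot_proj k (proj_perp kD)) ww mulVf ?gt_eqF.
- by rewrite sqnorm_dot dotZl dotZr ww mulVf ?mulr1 // gt_eqF.
Qed.

End Basis.

Lemma leverage_deficit : exists s : 'I_n -> R,
  [/\ forall k, 0 <= s k, \sum_k s k <= (count (predC1 0%R) L)%:R,
      forall k, k \notin D -> leverage (perp_off D L) k = 1 - s k &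
      forall k, k \notin D -> 0 < 1 - s k ->
        exists u, [/\ perp_off D L u, u ord0 k = 1 & sqnorm u = (1 - s k)^-1]].
Proof.
have [q [g [q_le g_on g_off g_span]]] := gram_schmidt L_off.
exists (fun k => \sum_l g l ord0 k ^+ 2); split.
- by move=> k; apply: sumr_ge0 => l _; apply: sqr_ge0.
- by rewrite (sum_proj_sqnorm g_on) ler_nat.
- exact: leverage_perp.
- exact: unit_at_perp.
Qed.

End Leverage.

Section Step.
Variables (R : realType) (m n : nat) (A : 'M[R]_(m, n)).
Implicit Types (x u v : 'rV[R]_n) (k : 'I_n).

Definition zero_on (D : {set 'I_n}) v : 'rV[R]_n := \row_i (if i \in D then 0 else v ord0 i).

Definition constraints x : seq 'rV[R]_n :=
  zero_on (Dset x) x :: [seq zero_on (Dset x) (row j A) | j <- enum 'I_m].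

Definition crs_next x k b : 'rV[R]_n :=
  x + (sgnb R b - x ord0 k) *: find_vector (Hsub A x) k.

Lemma dot_zero_on (D : {set 'I_n}) u v : (forall i, i \in D -> u ord0 i = 0) ->
  dot u (zero_on D v) = dot u v.
Proof.
by move=> u0; apply: eq_bigr => i _; rewrite mxE; case: ifP => // /u0 ->; rewrite !mul0r.
Qed.

Lemma dot_zero_onE (D : {set 'I_n}) u v :
  dot u (zero_on D v) = \sum_(i < n | i \notin D) u ord0 i * v ord0 i.
Proof.
by rewrite big_mkcond; apply: eq_bigr => i _; rewrite mxE; case: ifP; rewrite ?mulr0.
Qed.

Lemma row_in_constraints x j : zero_on (Dset x) (row j A) \in constraints x.
Proof. by rewrite inE; apply/orP; right; apply/mapP; exists j; rewrite ?mem_enum. Qed.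

Lemma HsubE x : Hsub A x = perp_off (Dset x) (constraints x).
Proof.
apply/funext => v; apply/propext; rewrite /Hsub /perp_off /=.
have rowE j : dot v (zero_on (Dset x) (row j A)) =
    \sum_(i < n | i \notin Dset x) A j i * v ord0 i.
  by rewrite dot_zero_onE; apply: eq_bigr => i _; rewrite mxE mulrC.
split=> [[v0 [vx vA]]|[v0 vL]]; split=> //.
  move=> a; rewrite inE => /predU1P [->|/mapP [j _ ->]]; first by rewrite dot_zero_onE.
  by rewrite rowE.
split=> [|j]; first by rewrite -dot_zero_onE vL ?mem_head.
by rewrite -rowE vL ?row_in_constraints.
Qed.

Lemma constraints_off x :
  {in constraints x, forall a : 'rV[R]_n, forall i, i \in Dset x -> a ord0 i = 0}.
Proof. by move=> a; rewrite inE => /predU1P [->|/mapP [j _ ->]] i iD; rewrite mxE iD. Qed.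

Lemma count_constraints x :
  (count (predC1 0%R) (constraints x) <= (zero_on (Dset x) x != 0%R) + m)%N.
Proof.
rewrite /= leq_add2l; apply: leq_trans (count_size _ _) _.
by rewrite size_map size_enum_ord.
Qed.

Lemma leverage_Hsub x : exists s : 'I_n -> R,
  [/\ forall k, 0 <= s k, \sum_k s k <= ((zero_on (Dset x) x != 0%R) + m)%:R,
      forall k, k \notin Dset x -> leverage (Hsub A x) k = 1 - s k &
      forall k, k \notin Dset x -> 0 < 1 - s k ->
        exists u, [/\ Hsub A x u, u ord0 k = 1 & sqnorm u = (1 - s k)^-1]].
Proof.
have [s [s_ge0 s_sum s_lev s_unit]] := leverage_deficit (constraints_off (x := x)).
exists s; rewrite HsubE; split=> //.
by apply: le_trans s_sum _; rewrite ler_nat count_constraints.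
Qed.

Lemma pick_k_Some x k : pick_k A x = Some k ->
  [/\ k \notin Dset x, 1 - crs_gamma R <= leverage (Hsub A x) k & `|x ord0 k| <= crs_delta R].
Proof.
rewrite /pick_k; set S := [seq _ <- _ | _] => pick.
have : k \in S by move: pick; case: S => //= j s [<-]; rewrite mem_head.
by rewrite mem_filter => /andP [/andP [/andP []]].
Qed.

Lemma pick_k_None x : pick_k A x = None -> forall k, k \notin Dset x ->
  1 - crs_gamma R <= leverage (Hsub A x) k -> crs_delta R < `|x ord0 k|.
Proof.
rewrite /pick_k; set S := [seq _ <- _ | _] => none k kD k_lev.
rewrite ltNge; apply/negP => k_small.
have : k \in S by rewrite mem_filter kD k_lev k_small mem_enum.
by move: none; case: S.
Qed.

Lemma find_vector_off x k i : i \in Dset x -> find_vector (Hsub A x) k ord0 i = 0.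
Proof. by move=> iD; rewrite /find_vector; case: xgetP => [u _ [[u0 _] _]|_]; rewrite ?mxE ?u0. Qed.

Lemma Hsub_orth x u : Hsub A x u -> dot x u = 0.
Proof. by rewrite HsubE => -[u0 uL]; rewrite dotC -(dot_zero_on x u0) uL ?mem_head. Qed.

Lemma Hsub_ker x u : Hsub A x u -> forall j, \sum_i A j i * u ord0 i = 0.
Proof.
rewrite HsubE => -[u0 uL] j; rewrite -[RHS](uL (zero_on (Dset x) (row j A))).
  by rewrite dot_zero_on //; apply: eq_bigr => i _; rewrite mxE mulrC.
exact: row_in_constraints.
Qed.

Lemma sqnorm_step x u a : Hsub A x u -> sqnorm (x + a *: u) = sqnorm x + a ^+ 2 * sqnorm u.
Proof.
move/Hsub_orth=> xu; rewrite !sqnorm_dot !(dotDl, dotDr, dotZl, dotZr) (dotC u x) xu.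
by ring.
Qed.

Lemma sqnorm_ge_coord u k : u ord0 k ^+ 2 <= sqnorm u.
Proof.
by rewrite /sqnorm (bigD1 k) //= lerDl; apply: sumr_ge0 => i _; apply: sqr_ge0.
Qed.

Lemma sqnorm_ge_coord2 u k j : j != k -> u ord0 k ^+ 2 + u ord0 j ^+ 2 <= sqnorm u.
Proof.
move=> jk; rewrite /sqnorm (bigD1 k) //= lerD2l (bigD1 j) //= lerDl.
by apply: sumr_ge0 => i _; apply: sqr_ge0.
Qed.

Lemma step_vector x k : pick_k A x = Some k ->
  let u := find_vector (Hsub A x) k in
  [/\ Hsub A x u, u ord0 k = 1, 1 <= sqnorm u, sqnorm u <= 10000/9999 &
      sqnorm u = (leverage (Hsub A x) k)^-1].
Proof.
move=> /pick_k_Some [kD k_lev _] u.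
have [s [_ _ s_lev s_unit]] := leverage_Hsub x.
rewrite s_lev // /crs_gamma in k_lev.
have s_lt1 : 0 < 1 - s k by apply: lt_le_trans k_lev; lra.
have [u_in [uk u_norm]] : Hsub A x u /\ u ord0 k = 1 /\ sqnorm u = (leverage (Hsub A x) k)^-1.
  have [w [w_in wk w_norm]] := s_unit k kD s_lt1.
  rewrite /u /find_vector.
  apply: (@xgetPex _ 0
    [set u | Hsub A x u /\ u ord0 k = 1 /\ sqnorm u = (leverage (Hsub A x) k)^-1]%classic).
  by exists w; rewrite s_lev.
split=> //; first by rewrite -(expr1n R 2) -uk sqnorm_ge_coord.
by rewrite u_norm s_lev // -[X in X <= _]mul1r ler_pdivrMr //; lra.
Qed.

End Step.

Section Invariant.
Variables (R : realType) (m n : nat) (A : 'M[R]_(m, n)).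
Implicit Types (x : 'rV[R]_n) (k : 'I_n).

Definition frozen x := [set i | `|x ord0 i| == 1].

(* The last clause is for [m = 0], where [n >= C m] is vacuous and failure is
   excluded directly: the iterates stay in {-1, 0, 1}^n, so [e_k] lies in [H_t]
   for every [k] outside [D_t]. *)
Definition crs_inv x t :=
  [/\ forall i, `|x ord0 i| = 1 \/ `|x ord0 i| < 19/20, #|frozen x| = t,
      forall j, \sum_i A j i * x ord0 i = 0 &
      m = 0%N -> forall i, `|x ord0 i| = 1 \/ x ord0 i = 0].

Lemma crs_inv0 : crs_inv 0 0.
Proof.
split=> [i|||_ i]; rewrite ?mxE ?normr0.
- by right; lra.
- by apply/eqP; rewrite cards_eq0; apply/eqP/setP => i; rewrite !inE mxE normr0 eq_sym oner_eq0.
- by move=> j; rewrite big1 // => i _; rewrite mxE mulr0.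
- by right.
Qed.

Lemma notin_Dset x i : (i \notin Dset x) = (`|x ord0 i| < 9/10).
Proof. by rewrite inE /crs_eta -ltNge; congr (_ < _); lra. Qed.

Lemma norm_sgnb b : `|sgnb R b| = 1.
Proof. by case: b; rewrite /= ?normrN normr1. Qed.

Lemma sgnb_inj : injective (sgnb R).
Proof. by case=> -[] //= h; exfalso; move: h; lra. Qed.

Lemma crs_next_at x k b : pick_k A x = Some k -> crs_next A x k b ord0 k = sgnb R b.
Proof. by move=> /step_vector [_ uk _ _ _]; rewrite !mxE uk mulr1 subrKC. Qed.

Lemma crs_next_Dset x k b i : i \in Dset x -> crs_next A x k b ord0 i = x ord0 i.
Proof. by move=> iD; rewrite !mxE find_vector_off // mulr0 addr0. Qed.

Lemma find_vector_other x k j : pick_k A x = Some k -> j != k ->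
  find_vector (Hsub A x) k ord0 j ^+ 2 <= sqnorm (find_vector (Hsub A x) k) - 1.
Proof.
move=> /step_vector [_ uk _ _ _] jk; rewrite lerBrDl.
by have := sqnorm_ge_coord2 (find_vector (Hsub A x) k) jk; rewrite uk expr1n.
Qed.

(* Since [||u||^2 <= 1/(1 - gamma)], the other coordinates of [u] are at most
   [1/99], and the step length is at most [1 + delta]. *)
Lemma crs_next_other x k b j : pick_k A x = Some k -> j != k ->
  `|crs_next A x k b ord0 j - x ord0 j| <= 1/90.
Proof.
move=> pick jk; have [_ _ xk] := pick_k_Some pick.
have [_ _ _ u_le _] := step_vector pick.
have uj := find_vector_other pick jk.
set u := find_vector _ _ in u_le uj *; set a := sgnb R b - x ord0 k.
have a_le : `|a| <= 21/20.
  by apply: le_trans (ler_normB _ _) _; rewrite norm_sgnb /crs_delta in xk *; lra.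
have uj_le : `|u ord0 j| <= 1/99.
  have : u ord0 j ^+ 2 <= 1/9999 by lra.
  by rewrite ler_norml => uj2; apply/andP; split; nra.
rewrite !mxE addrAC subrr add0r normrM.
by apply: le_trans (ler_pM _ _ a_le uj_le) _ => //; lra.
Qed.

Lemma leverage_m0 x k : m = 0%N -> (forall i, `|x ord0 i| = 1 \/ x ord0 i = 0) ->
  k \notin Dset x -> leverage (Hsub A x) k = 1.
Proof.
move=> m0 x01 kD; have [s [s_ge0 s_sum s_lev _]] := leverage_Hsub A x.
have x_off : zero_on (Dset x) x = 0.
  apply/rowP => i; rewrite !mxE; case: ifPn => // /[dup] iD; rewrite notin_Dset.
  by case: (x01 i) => ->; rewrite ?normr0 //; lra.
rewrite x_off m0 eqxx /= in s_sum; rewrite s_lev //.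
suff -> : s k = 0 by rewrite subr0.
apply/eqP; rewrite eq_le s_ge0 andbT; apply: le_trans s_sum.
by rewrite (bigD1 k) //= lerDl sumr_ge0.
Qed.

Lemma crs_inv_step x t k b : crs_inv x t -> pick_k A x = Some k ->
  crs_inv (crs_next A x k b) t.+1.
Proof.
move=> [x_band x_frozen x_ker x_m0] pick.
have [kD _ xk] := pick_k_Some pick; have [u_in uk _ _ u_lev] := step_vector pick.
set y := crs_next A x k b.
have y_other i : i \notin Dset x -> i != k -> `|y ord0 i| < 19/20.
  move=> iD ik; have := crs_next_other b pick ik; rewrite -/y notin_Dset in iD *.
  by have := ler_normD (y ord0 i - x ord0 i) (x ord0 i); rewrite subrK; lra.
have y_frozen : frozen y = k |: frozen x.
  apply/setP => i; rewrite !inE; have [->|ik] := eqVneq i k.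
    by rewrite crs_next_at // norm_sgnb eqxx.
  have [iD|iD] := boolP (i \in Dset x); first by rewrite crs_next_Dset.
  have := y_other i iD ik; rewrite notin_Dset in iD.
  by move=> y_lt; rewrite !lt_eqF //; lra.
split.
- move=> i; have [->|ik] := eqVneq i k; first by rewrite crs_next_at // norm_sgnb; left.
  by have [/crs_next_Dset ->|iD] := boolP (i \in Dset x); [|right; apply: y_other].
- rewrite y_frozen cardsU1 x_frozen inE lt_eqF //.
  by move: xk; rewrite /crs_delta; lra.
- move=> j; transitivity (\sum_i A j i * x ord0 i +
    (sgnb R b - x ord0 k) * \sum_i A j i * find_vector (Hsub A x) k ord0 i).
    by rewrite mulr_sumr -big_split; apply: eq_bigr => i _ /=; rewrite /y !mxE; ring.
  by rewrite x_ker (Hsub_ker u_in) mulr0 addr0.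
- move=> m0 i; have [->|ik] := eqVneq i k; first by rewrite crs_next_at // norm_sgnb; left.
  have [/crs_next_Dset ->|iD] := boolP (i \in Dset x); first exact: x_m0.
  have := find_vector_other pick ik.
  rewrite u_lev (leverage_m0 m0 (x_m0 m0) kD) invr1 subrr.
  move=> ui; rewrite !mxE (_ : find_vector _ k ord0 i = 0) ?mulr0 ?addr0; first exact: x_m0.
  by apply/eqP; rewrite -sqrf_eq0 eq_le ui sqr_ge0.
Qed.

End Invariant.

Section Failure.
Variables (R : realType) (m n : nat) (A : 'M[R]_(m, n)).
Implicit Types (x : 'rV[R]_n).

Lemma sum_frozen x (F : 'I_n -> R) : (forall i, i \in frozen x -> F i = 1) ->
  \sum_i F i = #|frozen x|%:R + \sum_(i | i \notin frozen x) F i.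
Proof.
move=> F1; rewrite (bigID (mem (frozen x))) /=; congr (_ + _).
by rewrite -sum1_card natr_sum; apply: eq_bigr.
Qed.

Lemma pick_k_m0 x t : m = 0%N -> crs_inv A x t -> (t < n)%N -> pick_k A x != None.
Proof.
move=> m0 [_ x_frozen _ x_m0] t_lt; apply/eqP => /pick_k_None none.
have /subsetPn [i _ i_free] : ~~ ([set: 'I_n] \subset frozen x).
  by apply/negP => /subset_leq_card; rewrite cardsT card_ord x_frozen leqNgt t_lt.
have xi : x ord0 i = 0.
  by case: (x_m0 m0 i) => // /eqP x1; rewrite inE x1 in i_free.
have iD : i \notin Dset x by rewrite notin_Dset xi normr0; lra.
have := none i iD; rewrite (leverage_m0 A m0 (x_m0 m0) iD) xi normr0 /crs_gamma /crs_delta.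
by lra.
Qed.

(* Counting the unfrozen coordinates: each of them is in D (so x_i^2 >= 81/100),
   or is too large (x_i^2 > 1/400), or has leverage deficit above gamma; hence
   [n <= t + 400 (||x||^2 - t) + 10000 (m + 1)]. *)
Lemma fail_sqnorm x t : (0 < m)%N -> 10 ^+ 6 * m%:R <= n%:R :> R ->
  crs_inv A x t -> t%:R <= 9/10 * n%:R :> R -> pick_k A x = None ->
  n%:R / 5000 <= sqnorm x - t%:R.
Proof.
move=> m_gt0 mn [_ x_frozen _ _] t_le /pick_k_None none.
have [s [s_ge0 s_sum s_lev _]] := leverage_Hsub A x.
have coord i : i \notin frozen x -> 1 <= 400 * x ord0 i ^+ 2 + 10000 * s i.
  move=> _; have := s_ge0 i; have := normr_ge0 (x ord0 i).
  rewrite -real_normK ?num_real // expr2.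
  have [iD|iD] := boolP (i \in Dset x).
    by move: iD; rewrite -[_ \in _]negbK notin_Dset -leNgt => xi x_ge0 si; nra.
  have := none i iD; rewrite s_lev // /crs_gamma /crs_delta => x_large x_ge0 si.
  by have [/x_large xi|] := lerP (1 - 1/10000) (1 - s i); nra.
have n_split : n%:R = t%:R + \sum_(i | i \notin frozen x) (1 : R).
  by rewrite -x_frozen -sum_frozen // sumr_const card_ord.
have x_split : sqnorm x = t%:R + \sum_(i | i \notin frozen x) x ord0 i ^+ 2.
  rewrite -x_frozen -sum_frozen // => i; rewrite inE => /eqP x1.
  by rewrite -real_normK ?num_real // x1 expr1n.
have s_free : \sum_(i | i \notin frozen x) s i <= 1 + m%:R.
  apply: le_trans (le_trans _ s_sum) _; last by rewrite natrD lerD2r lern1 leq_b1.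
  by rewrite [leRHS](bigID (mem (frozen x))) /= lerDr sumr_ge0.
have count_free : \sum_(i | i \notin frozen x) (1 : R) <=
    400 * \sum_(i | i \notin frozen x) x ord0 i ^+ 2 +
    10000 * \sum_(i | i \notin frozen x) s i.
  by rewrite !mulr_sumr -big_split ler_sum.
have m_ge1 : 1 <= m%:R :> R by rewrite ler1n.
by lra.
Qed.

End Failure.

Section Run.
Variables (R : realType) (m n : nat) (A : 'M[R]_(m, n)).
Implicit Types (x y : 'rV[R]_n) (bs : seq bool).

Section Unfold.
Variables (x : 'rV[R]_n) (b : bool) (bs : seq bool).

Lemma run_from_next k : pick_k A x = Some k ->
  run_from A x (b :: bs) = run_from A (crs_next A x k b) bs.
Proof. by rewrite /= /crs_step => ->. Qed.

Lemma weight_from_next k : pick_k A x = Some k ->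
  weight_from A x (b :: bs) =
    (1 + sgnb R b * x ord0 k) / 2 * weight_from A (crs_next A x k b) bs.
Proof. by rewrite /= /crs_step => ->. Qed.

Lemma run_from_stuck : pick_k A x = None -> run_from A x (b :: bs) = None.
Proof. by rewrite /= /crs_step => ->. Qed.

Lemma weight_from_stuck : pick_k A x = None ->
  weight_from A x (b :: bs) = 2^-1 ^+ (size bs).+1.
Proof. by rewrite /= /crs_step => ->. Qed.

End Unfold.

Lemma run_from_inv bs x y t : crs_inv A x t -> run_from A x bs = Some y ->
  crs_inv A y (t + size bs).
Proof.
elim: bs x t => [|b bs IHbs] x t x_inv; first by case=> <-; rewrite addn0.
case pick: (pick_k A x) => [k|]; last by rewrite run_from_stuck.
by rewrite (run_from_next _ _ pick) /= -addSnnS; apply: IHbs; apply: crs_inv_step.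
Qed.

Lemma run_from_frozen bs x y k : `|x ord0 k| = 1 -> run_from A x bs = Some y ->
  y ord0 k = x ord0 k.
Proof.
elim: bs x => [|b bs IHbs] x xk; first by case=> <-.
case pick: (pick_k A x) => [j|]; last by rewrite run_from_stuck.
have kD : k \in Dset x by rewrite -[_ \in _]negbK notin_Dset xk; lra.
by rewrite (run_from_next _ _ pick) => /IHbs ->; rewrite crs_next_Dset.
Qed.

Lemma run_from_distinct bs bs' x y y' : size bs = size bs' -> bs != bs' ->
  run_from A x bs = Some y -> run_from A x bs' = Some y' ->
  exists i, [/\ `|y ord0 i| = 1, `|y' ord0 i| = 1 & y ord0 i != y' ord0 i].
Proof.
elim: bs bs' x => [|b bs IHbs] [|b' bs'] x // [size_eq] neq //.
case pick: (pick_k A x) => [k|]; last by rewrite !run_from_stuck.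
rewrite !(run_from_next _ _ pick).
have [bb'|bb'] := eqVneq b b'.
  by move: neq; rewrite -bb' eqseq_cons eqxx; apply: IHbs.
move=> run run'; exists k.
have frozen_k c : `|crs_next A x k c ord0 k| = 1 by rewrite crs_next_at ?norm_sgnb.
rewrite (run_from_frozen (frozen_k b) run) (run_from_frozen (frozen_k b') run').
by rewrite !crs_next_at // !norm_sgnb (inj_eq (@sgnb_inj R)).
Qed.

Lemma weight_from_sum1 s x : \sum_(r : s.-tuple bool) weight_from A x r = 1.
Proof.
elim: s x => [|s IHs] x; first by rewrite big_tuple0.
rewrite big_tuple_cons; case pick: (pick_k A x) => [k|].
  under eq_bigr => b _ do under eq_bigr => r _ do rewrite (weight_from_next _ _ pick).
  by rewrite big_bool /= -!mulr_sumr !IHs; lra.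
under eq_bigr => b _ do under eq_bigr => r _ do rewrite (weight_from_stuck _ _ pick) size_tuple.
have half : \sum_(r : s.-tuple bool) (2^-1 : R) ^+ s.+1 = 2^-1.
  rewrite sumr_const card_tuple card_bool -[_ *+ (2 ^ s)]mulr_natr natrX.
  by rewrite exprS -mulrA -exprMn mulVf ?pnatr_eq0 // expr1n mulr1.
by rewrite big_bool /= half; lra.
Qed.

End Run.

Section FailureProbability.
Variables (R : realType) (m n : nat) (A : 'M[R]_(m, n)).
Implicit Types (x : 'rV[R]_n).

Definition fail_weight x s :=
  \sum_(r : s.-tuple bool) weight_from A x r * (run_from A x r == None)%:R.

Lemma coin_weight_ge0 x k b : pick_k A x = Some k ->
  0 <= (1 + sgnb R b * x ord0 k) / 2.
Proof.
move=> /pick_k_Some [_ _]; rewrite /crs_delta ler_norml => /andP [xk_lo xk_hi].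
by case: b => /=; lra.
Qed.

Lemma fail_weight_next x k s : pick_k A x = Some k -> fail_weight x s.+1 =
  \sum_(b : bool) (1 + sgnb R b * x ord0 k) / 2 * fail_weight (crs_next A x k b) s.
Proof.
move=> pick; rewrite /fail_weight.
rewrite (big_tuple_cons (fun r => weight_from A x r * (run_from A x r == None)%:R)).
apply: eq_bigr => b _; rewrite mulr_sumr; apply: eq_bigr => r _.
by rewrite (weight_from_next _ _ pick) (run_from_next _ _ pick) mulrA.
Qed.

Lemma fail_weight_stuck x s : pick_k A x = None -> fail_weight x s.+1 = 1.
Proof.
move=> pick; rewrite -(weight_from_sum1 A s.+1 x) /fail_weight.
rewrite (big_tuple_cons (fun r => weight_from A x r * (run_from A x r == None)%:R)).
rewrite big_tuple_cons; apply: eq_bigr => b _; apply: eq_bigr => r _.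
by rewrite run_from_stuck // eqxx mulr1.
Qed.

Section OptionalStopping.
Variables (T : nat) (Phi : 'rV[R]_n -> nat -> nat -> R).
Hypothesis Phi_ge0 : forall x t, 0 <= Phi x t 0.
Hypothesis Phi_stuck : forall x t s, crs_inv A x t -> (t < T)%N -> pick_k A x = None ->
  1 <= Phi x t s.+1.
Hypothesis Phi_next : forall x t s k, crs_inv A x t -> pick_k A x = Some k ->
  \sum_(b : bool) (1 + sgnb R b * x ord0 k) / 2 * Phi (crs_next A x k b) t.+1 s
  <= Phi x t s.+1.

Lemma fail_weight_le s x t : crs_inv A x t -> (t + s <= T)%N ->
  fail_weight x s <= Phi x t s.
Proof.
elim: s x t => [|s IHs] x t x_inv ts.
  rewrite /fail_weight.
  by rewrite (big_tuple0 (fun r => weight_from A x r * (run_from A x r == None)%:R)) mulr0.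
case pick: (pick_k A x) => [k|]; last by rewrite fail_weight_stuck // Phi_stuck //; lia.
rewrite (fail_weight_next _ pick); apply: le_trans (Phi_next s x_inv pick).
apply: ler_sum => b _; rewrite ler_wpM2l ?(coin_weight_ge0 b pick) // IHs //.
  exact: crs_inv_step.
by rewrite addSnnS.
Qed.

End OptionalStopping.

Hypothesis mn : 10 ^+ 6 * m%:R <= n%:R :> R.

Let T := ((9 * n) %/ 10)%N.

Lemma natr_le_T t : (t <= T)%N -> t%:R <= 9/10 * n%:R :> R.
Proof.
move=> tT; have : ((t * 10)%:R <= (9 * n)%:R :> R).
  by rewrite ler_nat; apply: leq_trans (leq_divM _ 10); rewrite leq_mul2r tT orbT.
by rewrite !natrM; lra.
Qed.

(* [s] counts the remaining steps: [crs_potential x_t t (T - t)] is a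
   supermartingale, the drift term compensating the mean increment of
   [||x_t||^2 - t], and it is at least 1 when the procedure gets stuck. *)
Definition crs_potential x t s : R :=
  if m == 0%N then 0
  else expR (tilt R * (sqnorm x - t%:R + drift R * s%:R - n%:R / 5000)).

Lemma crs_potential_next x t s k : pick_k A x = Some k ->
  \sum_(b : bool) (1 + sgnb R b * x ord0 k) / 2 * crs_potential (crs_next A x k b) t.+1 s
  <= crs_potential x t s.+1.
Proof.
move=> pick; rewrite /crs_potential.
case: ifP => _; first by rewrite big1 // => b _; rewrite mulr0.
have [_ _ xk] := pick_k_Some pick; have [u_in _ S_ge S_le _] := step_vector pick.
set S := sqnorm _ in S_ge S_le.
set E := tilt R * (sqnorm x - t%:R + drift R * s%:R - n%:R / 5000).
have expand b : tilt R * (sqnorm (crs_next A x k b) - t.+1%:R + drift R * s%:R - n%:R / 5000)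
    = E + tilt R * ((sgnb R b - x ord0 k) ^+ 2 * S - 1).
  by rewrite /crs_next (sqnorm_step _ u_in) -natr1 /E /S; ring.
under eq_bigr => b _ do rewrite expand expRD mulrCA.
rewrite -mulr_sumr -natr1 (_ : tilt R * _ = E + tilt R * drift R); last by rewrite /E; ring.
by rewrite expRD ler_wpM2l ?expR_ge0 // two_point_mgf.
Qed.

Lemma crs_potential_stuck x t s : crs_inv A x t -> (t < T)%N -> pick_k A x = None ->
  1 <= crs_potential x t s.+1.
Proof.
move=> x_inv tT none; rewrite /crs_potential.
have [m0|m_neq0] := eqVneq m 0%N.
  have t_lt : (t < n)%N by rewrite /T in tT; lia.
  by move: (pick_k_m0 m0 x_inv t_lt); rewrite none.
have m_gt0 : (0 < m)%N by rewrite lt0n.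
have := fail_sqnorm m_gt0 mn x_inv (natr_le_T (ltnW tT)) none.
move=> x_large; apply: le_trans (expR_ge1Dx _); rewrite lerDl.
have : 0 <= drift R * s.+1%:R by apply: mulr_ge0; [rewrite /drift; lra | exact: ler0n].
by rewrite /tilt; lra.
Qed.

Lemma crs_fail_weight : fail_weight 0 T <= 1/100.
Proof.
apply: le_trans
  (fail_weight_le (T := T) (Phi := crs_potential) _ _ _ (crs_inv0 A) (leqnn T)) _.
- by move=> x t; rewrite /crs_potential; case: ifP => // _; apply: expR_ge0.
- exact: crs_potential_stuck.
- by move=> x t s k _; apply: crs_potential_next.
rewrite /crs_potential; case: eqP => [_|/eqP m_neq0]; first lra.
have m_ge1 : 1 <= m%:R :> R by rewrite ler1n lt0n.
have sqnorm0 : sqnorm (0 : 'rV[R]_n) = 0.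
  by rewrite /sqnorm big1 // => i _; rewrite mxE expr0n.
apply: le_trans (_ : expR (- (27/5)) <= _).
  rewrite ler_expR sqnorm0 mulr0n subrr add0r.
  exact: tilt_exponent_le mn m_ge1 (natr_le_T (leqnn T)).
rewrite expRN -div1r ler_pdivrMr ?expR_gt0 //; have := expR_ge100 R; lra.
Qed.

End FailureProbability.

Section Success.
Variables (R : realType) (m n : nat) (A : 'M[R]_(m, n)).

Lemma crs_goodE T (r : T.-tuple bool) : crs_good A r = (crs_run A r != None).
Proof.
rewrite /crs_good /crs_run; case run: (run_from A 0 r) => [y|] //=.
have [y_band y_frozen y_ker _] := run_from_inv (crs_inv0 A) run.
rewrite size_tuple add0n in y_frozen.
apply/andP; split; first (apply/andP; split).
- by apply/forallP => i; case: (y_band i) => [->|]; lra.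
- (* the set in [crs_good] is a classical set, read as a predicate via [asbool] *)
  rewrite -y_frozen; apply/eqP/eq_card => i; rewrite inE.
  by apply/idP/idP => [/asboolP|yi] //; apply/asboolP.
apply: (big_ind (fun v : R => v == 0)) => // [a b /eqP-> /eqP->|j _].
  by rewrite maxxx.
by rewrite y_ker normr0.
Qed.

Lemma good_weight_sum T :
  \sum_(r : T.-tuple bool | crs_good A r) crs_weight A r = 1 - fail_weight A 0 T.
Proof.
rewrite -(weight_from_sum1 A T 0) /fail_weight -sumrB big_mkcond /=.
apply: eq_bigr => r _; rewrite crs_goodE /crs_run /crs_weight.
by case: (run_from A 0 r) => [y|] /=; rewrite ?mulr0 ?subr0 ?mulr1 ?subrr.
Qed.

End Success.

Theorem lemma5p3 (R : realType) (Cstar : R) (m n : nat) (A : 'M[R]_(m, n)) :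
  10 ^+ 6 <= Cstar ->
  (forall (j : 'I_m) (i : 'I_n), `|A j i| <= 1) ->
  Cstar * m%:R <= n%:R ->
  let T := ((9 * n) %/ 10)%N in
  99 / 100 <= \sum_(r : T.-tuple bool | crs_good A r) crs_weight A r
  /\ (forall (r r' : T.-tuple bool) (x x' : 'rV[R]_n),
        r != r' -> crs_run A r = Some x -> crs_run A r' = Some x' ->
        exists i : 'I_n, `|x ord0 i| = 1 /\ `|x' ord0 i| = 1 /\ x ord0 i != x' ord0 i).
Proof.
(* The bound on the entries of [A] is not needed. *)
move=> C_ge _ n_ge T; split.
  have mn : 10 ^+ 6 * m%:R <= n%:R :> R.
    by apply: le_trans n_ge; rewrite ler_wpM2r.
  by rewrite good_weight_sum; have := crs_fail_weight A mn; lra.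
move=> r r' x x' r_neq run run'.
have [|i [xi x'i neq]] := run_from_distinct _ r_neq run run'; first by rewrite !size_tuple.
by exists i.
Qed.
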